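(* Let $\mathcal{R}$ be a tolerance relation on $X=\{1,\dots,n\}$ with chordal graph $G(\mathcal{R})$, and let $C$ be a maximal clique of $G(\mathcal{R})$. Let $F=\{(x_{ij})\in E(\mathcal{R})\mid x_{ij}=0\text{ unless }i,j\in C\}\subseteq E(\mathcal{R})^d$, equipped with the matrix order inherited from $E(\mathcal{R})^d$. Then the canonical linear identification $F\cong M_{|C|}(\mathbb{C})$, $(x_{ij})\mapsto (x_{ij})_{i,j\in C}$, is a complete order isomorphism (in particular $C^*_{\mathrm{env}}(F)=M_{|C|}(\mathbb{C})$).
   Context: A tolerance relation on $X=\{1,\dots,n\}$ is a reflexive symmetric relation $\mathcal{R}\subseteq X\times X$; its graph $G(\mathcal{R})$ has vertex set $X$ and an edge between distinct $i,j$ iff $(i,j)\in\mathcal{R}$. A graph is chordal if every cycle of length at least 4 has a chord. $E(\mathcal{R})=\{(x_{ij})\in M_n(\mathbb{C})\mid x_{ij}=0\text{ if }(i,j)\notin\mathcal{R}\}$. The dual $E(\mathcal{R})^d$ is identified with $E(\mathcal{R})$ with matrix order $M_m(E(\mathcal{R})^d)_+=\{M\in M_m(E(\mathcal{R}))\mid\exists N\in M_m(E(\mathcal{R})^\perp),\ M+N\in M_{mn}(\mathbb{C})_+\}$, $E(\mathcal{R})^\perp=\{y\in M_n(\mathbb{C})\mid y_{ij}=0\ \forall(i,j)\in\mathcal{R}\}$. *)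

From mathcomp Require Import all_boot all_order all_algebra all_field.
Set Implicit Arguments. Unset Strict Implicit. Unset Printing Implicit Defensive.
Import Order.TTheory GRing.Theory Num.Theory.
Local Open Scope ring_scope.

Definition psd (I : finType) (A : I -> I -> algC) : Prop :=
  forall v : I -> algC, 0 <= \sum_i \sum_j (v i)^* * A i j * v j.

Definition adj (n : nat) (R : rel 'I_n) : rel 'I_n :=
  fun i j => (i != j) && R i j.

Definition chordal (n : nat) (R : rel 'I_n) : Prop :=
  forall s : seq 'I_n, uniq s -> (4 <= size s)%N -> cycle (adj R) s ->
    exists x y, [/\ x \in s, y \in s, adj R x y, y != next s x & x != next s y].

Definition clique (n : nat) (R : rel 'I_n) (C : {set 'I_n}) : Prop :=
  forall i j, i \in C -> j \in C -> i != j -> adj R i j.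

Definition maximal_clique (n : nat) (R : rel 'I_n) (C : {set 'I_n}) : Prop :=
  clique R C /\ forall D : {set 'I_n}, clique R D -> C \subset D -> D = C.

Definition inE (n : nat) (R : rel 'I_n) (x : 'M[algC]_n) : Prop :=
  forall i j, ~~ R i j -> x i j = 0.
Definition inEperp (n : nat) (R : rel 'I_n) (y : 'M[algC]_n) : Prop :=
  forall i j, R i j -> y i j = 0.
Definition inF (n : nat) (R : rel 'I_n) (C : {set 'I_n}) (x : 'M[algC]_n) : Prop :=
  inE R x /\ forall i j, ~~ ((i \in C) && (j \in C)) -> x i j = 0.

(* An m x m matrix of n x n matrices, viewed as an (mn) x (mn) matrix
   indexed by 'I_m * 'I_n. *)
Definition flat (m k : nat) (M : 'I_m -> 'I_m -> 'M[algC]_k)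
  : ('I_m * 'I_k)%type -> ('I_m * 'I_k)%type -> algC :=
  fun p q => M p.1 q.1 p.2 q.2.

Definition dual_pos (n : nat) (R : rel 'I_n) (m : nat)
  (M : 'I_m -> 'I_m -> 'M[algC]_n) : Prop :=
  (forall a b, inE R (M a b)) /\
  exists N : 'I_m -> 'I_m -> 'M[algC]_n,
    (forall a b, inEperp R (N a b)) /\ psd (flat (fun a b => M a b + N a b)).

Definition F_pos (n : nat) (R : rel 'I_n) (C : {set 'I_n}) (m : nat)
  (M : 'I_m -> 'I_m -> 'M[algC]_n) : Prop :=
  (forall a b, inF R C (M a b)) /\ @dual_pos n R m M.

Definition restrictC (n : nat) (C : {set 'I_n}) (x : 'M[algC]_n) : 'M[algC]_#|C| :=
  \matrix_(a, b) x (enum_val a) (enum_val b).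

From mathcomp Require Import all_boot all_order all_algebra all_field.
Set Implicit Arguments.
Unset Strict Implicit.
Unset Printing Implicit Defensive.

Import Order.TTheory GRing.Theory Num.Theory.
Local Open Scope ring_scope.

(* Elements of F are supported on the block C x C, on which every element of
   E(R)^perp vanishes because C is a clique and R is reflexive.  Hence for
   M in M_m(F), compressing M + N to the C-block gives back the restriction
   of M whatever N in M_m(E(R)^perp) is chosen, and compressions of positive
   matrices are positive; conversely N = 0 works, since a matrix supported on
   the C-block is positive as soon as its C-block is. *)

Lemma big_supp_codom (V : nmodType) (I J : finType) (f : J -> I) (g : I -> V) :
  injective f -> (forall i, i \notin codom f -> g i = 0) ->
  \sum_i g i = \sum_j g (f j).
Proof.
move=> injf g0; rewrite (bigID (mem (codom f))) /= [X in _ + X]big1 ?addr0 //.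
rewrite -(big_imset _ (in2W injf)) /=; apply: eq_bigl => i.
by apply/idP/imsetP => [/codomP[j ->]|[j _ ->]]; [exists j | exact: codom_f].
Qed.

Lemma eq_psd (I : finType) (A B : I -> I -> algC) : A =2 B -> psd A -> psd B.
Proof.
move=> eAB psdA v; have := psdA v; congr (0 <= _).
by apply: eq_bigr => i _; apply: eq_bigr => j _; rewrite eAB.
Qed.

Lemma psd_comp_inj (I J : finType) (f : J -> I) (A : I -> I -> algC) :
  injective f -> psd A -> psd (fun p q => A (f p) (f q)).
Proof.
move=> injf psdA v; pose w i := \sum_(j | f j == i) v j.
have wE j : w (f j) = v j.
  by rewrite /w (big_pred1 j) // => k; rewrite /= (inj_eq injf).
have w0 i : i \notin codom f -> w i = 0.
  by move=> Ni; apply: big1 => j /eqP Ej; case/negP: Ni; rewrite -Ej codom_f.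
have := psdA w; rewrite (big_supp_codom injf); last first.
  by move=> i /w0 ->; apply: big1 => j _; rewrite conjC0 !mul0r.
congr (0 <= _); apply: eq_bigr => p _.
rewrite (big_supp_codom injf); last by move=> i /w0 ->; rewrite mulr0.
by apply: eq_bigr => q _; rewrite !wE.
Qed.

Lemma psd_supp_codom (I J : finType) (f : J -> I) (A : I -> I -> algC) :
  injective f ->
  (forall i k, (i \notin codom f) || (k \notin codom f) -> A i k = 0) ->
  psd (fun p q => A (f p) (f q)) -> psd A.
Proof.
move=> injf A0 psdAf w; have := psdAf (w \o f).
rewrite (big_supp_codom injf); last first.
  by move=> i Ni; apply: big1 => k _; rewrite A0 ?Ni // mulr0 mul0r.
congr (0 <= _); apply: eq_bigr => p _.
rewrite (big_supp_codom injf) // => k Nk.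
by rewrite A0 ?Nk ?orbT // mulr0 mul0r.
Qed.

Lemma clique_rel (n : nat) (R : rel 'I_n) (C : {set 'I_n}) :
  reflexive R -> clique R C -> {in C &, forall i j, R i j}.
Proof.
move=> Rrefl RC i j Ci Cj; have [->|ne_ij] := eqVneq i j; first exact: Rrefl.
by case/andP: (RC i j Ci Cj ne_ij).
Qed.

Section CliqueBlock.

Variables (n : nat) (C : {set 'I_n}).

Lemma restrictC_is_linear : linear (restrictC C).
Proof. by move=> a x y; apply/matrixP => i j; rewrite !mxE. Qed.

Lemma restrictC_inj (x y : 'M[algC]_n) :
  (forall i j, ~~ ((i \in C) && (j \in C)) -> x i j = 0) ->
  (forall i j, ~~ ((i \in C) && (j \in C)) -> y i j = 0) ->
  restrictC C x = restrictC C y -> x = y.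
Proof.
move=> x0 y0 /matrixP exy; apply/matrixP => i j.
have [/andP[Ci Cj]|NCij] := boolP ((i \in C) && (j \in C)); last by rewrite x0 ?y0.
by have := exy (enum_rank_in Ci i) (enum_rank_in Cj j); rewrite !mxE !enum_rankK_in.
Qed.

Definition extendC (Y : 'M[algC]_#|C|) : 'M[algC]_n :=
  \matrix_(i, j) \sum_(a | enum_val a == i) \sum_(b | enum_val b == j) Y a b.

Lemma extendCK : cancel extendC (restrictC C).
Proof.
move=> Y; apply/matrixP => a b; rewrite !mxE.
rewrite (big_pred1 a) => [|k]; last by rewrite /= (inj_eq enum_val_inj).
by rewrite (big_pred1 b) // => k; rewrite /= (inj_eq enum_val_inj).
Qed.

Lemma extendC_supp (Y : 'M[algC]_#|C|) i j :
  ~~ ((i \in C) && (j \in C)) -> extendC Y i j = 0.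
Proof.
rewrite mxE => NCij; apply: big1 => a /eqP Ea; apply: big1 => b /eqP Eb.
by move: NCij; rewrite -Ea -Eb !enum_valP.
Qed.

Variables (R : rel 'I_n) (Rrefl : reflexive R) (RC : clique R C).

Lemma inF_extendC (Y : 'M[algC]_#|C|) : inF R C (extendC Y).
Proof.
split; last exact: extendC_supp.
move=> i j NRij; apply: extendC_supp; apply: contra NRij => /andP[Ci Cj].
exact: clique_rel Rrefl RC i j Ci Cj.
Qed.

Variable m : nat.

Definition liftC (q : 'I_m * 'I_#|C|) : 'I_m * 'I_n := (q.1, enum_val q.2).

Lemma liftC_inj : injective liftC.
Proof. by move=> [a i] [b j] [-> /enum_val_inj ->]. Qed.

Lemma mem_codom_liftC p : (p \in codom liftC) = (p.2 \in C).
Proof.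
apply/codomP/idP => [[q ->]|Cp]; first exact: enum_valP.
by exists (p.1, enum_rank_in Cp p.2); rewrite /liftC /= enum_rankK_in //; case: p Cp.
Qed.

Lemma flat_restrictC (M : 'I_m -> 'I_m -> 'M[algC]_n) p q :
  flat (fun a b => restrictC C (M a b)) p q = flat M (liftC p) (liftC q).
Proof. by rewrite /flat mxE. Qed.

Lemma F_pos_psd_restrictC (M : 'I_m -> 'I_m -> 'M[algC]_n) :
  F_pos R C M -> psd (flat (fun a b => restrictC C (M a b))).
Proof.
case=> _ [_ [N [N0 psdMN]]]; have := psd_comp_inj liftC_inj psdMN.
apply: eq_psd => p q; rewrite flat_restrictC /flat mxE N0 ?addr0 //.
by apply: (clique_rel Rrefl RC); rewrite ?enum_valP.
Qed.

Lemma psd_restrictC_F_pos (M : 'I_m -> 'I_m -> 'M[algC]_n) :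
  (forall a b, inF R C (M a b)) ->
  psd (flat (fun a b => restrictC C (M a b))) -> F_pos R C M.
Proof.
move=> MF psdMC; split=> //; split=> [a b|]; first by case: (MF a b).
exists (fun _ _ => 0); split=> [a b i j _|]; first by rewrite mxE.
apply: (psd_supp_codom liftC_inj) => [[a i] [b j]|].
  rewrite !mem_codom_liftC /flat /= addr0 => NCij.
  by case: (MF a b) => _ ->; rewrite // negb_and.
by apply: eq_psd psdMC => p q; rewrite flat_restrictC /flat addr0.
Qed.

End CliqueBlock.

Theorem mainTheorem7 (n : nat) (R : rel 'I_n)
  (Rrefl : reflexive R) (Rsym : symmetric R) (Rchordal : chordal R)
  (C : {set 'I_n}) (HC : maximal_clique R C) :
  (* restrictC is a linear bijection F -> M_{|C|}(C) ... *)
  (forall (a : algC) (x y : 'M[algC]_n),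
      restrictC C (a *: x + y) = a *: restrictC C x + restrictC C y) /\
  (forall x y : 'M[algC]_n, inF R C x -> inF R C y ->
      restrictC C x = restrictC C y -> x = y) /\
  (forall Y : 'M[algC]_#|C|, exists x : 'M[algC]_n, inF R C x /\ restrictC C x = Y) /\
  (* ... and a complete order isomorphism *)
  (forall (m : nat) (M : 'I_m -> 'I_m -> 'M[algC]_n),
      (forall a b, inF R C (M a b)) ->
      (@F_pos n R C m M <-> psd (flat (fun a b => restrictC C (M a b))))).
Proof.
have [RC _] := HC.
split; first exact: restrictC_is_linear.
split; first by move=> x y [_ x0] [_ y0]; apply: restrictC_inj.
split; first by move=> Y; exists (extendC Y); split; [exact: inF_extendC | exact: extendCK].
by move=> m M MF; split; [exact: F_pos_psd_restrictC | exact: psd_restrictC_F_pos].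
Qed.
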